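(* Let $-D/2\le x_{\rm I}<x_{\rm F}\le D/2$, and let $(r_1^{\rm I},r_2^{\rm I})\in\partial\mathcal{C}_f(x_{\rm I})$ and $(r_1^{\rm F},r_2^{\rm F})\in\partial\mathcal{C}_f(x_{\rm F})$ be the points at which the upper-right common tangent line of $\mathcal{C}_f(x_{\rm I})$ and $\mathcal{C}_f(x_{\rm F})$ (the supporting line of $\mathrm{Conv}(\mathcal{C}_f(x_{\rm I})\cup\mathcal{C}_f(x_{\rm F}))$ touching both sets) touches them. Define the triangle region $$\mathcal{C}_{\rm IF}=\left\{(r_1,r_2): r_2\le k_{\rm IF}(r_1-r_1^{\rm I})+r_2^{\rm I},\ r_1\ge0,\ r_2\ge0\right\},\qquad k_{\rm IF}=\frac{r_2^{\rm I}-r_2^{\rm F}}{r_1^{\rm I}-r_1^{\rm F}}.$$ Then for any location $x\in[x_{\rm I},x_{\rm F}]$, $\mathcal{C}_f(x)\subseteq\mathrm{Conv}\big(\mathcal{C}_f(x_{\rm I})\cup\mathcal{C}_f(x_{\rm F})\big)$ if and only if $\mathcal{C}_f(x)\subseteq\mathcal{C}_{\rm IF}$.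
   Context: Fix $D>0$, $H>0$, $\beta_0>0$, $\bar P>0$. Ground users GU 1, GU 2 are at horizontal positions $x_1=-D/2$, $x_2=D/2$; for a UAV at horizontal position $x$ (altitude $H$), $h_k(x)=\beta_0/((x-x_k)^2+H^2)$. For $p_1,p_2\ge0$, $\mathcal{C}_{\rm MAC}(x,p_1,p_2)$ is the set of $(r_1,r_2)$, $r_1,r_2\ge0$, with $r_1\le\log_2(1+p_1h_1(x))$, $r_2\le\log_2(1+p_2h_2(x))$, $r_1+r_2\le\log_2(1+p_1h_1(x)+p_2h_2(x))$; the fixed-location capacity region is $\mathcal{C}_f(x)=\bigcup_{p_1,p_2\ge0,\,p_1+p_2\le\bar P}\mathcal{C}_{\rm MAC}(x,p_1,p_2)$ (a convex set). $\partial$ denotes boundary and $\mathrm{Conv}$ convex hull. *)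

From Stdlib Require Import Reals.
Open Scope R_scope.

Definition log2 (y : R) : R := ln y / ln 2.

(** Channel gain from GU at horizontal position xk to the UAV at x (altitude H). *)
Definition chan_gain (beta0 H xk x : R) : R := beta0 / ((x - xk) ^ 2 + H ^ 2).
Definition h1 (D H beta0 x : R) : R := chan_gain beta0 H (- D / 2) x.
Definition h2 (D H beta0 x : R) : R := chan_gain beta0 H (D / 2) x.

Definition rset := R * R -> Prop.

Definition C_MAC (D H beta0 x p1 p2 : R) : rset := fun r =>
  0 <= fst r /\ 0 <= snd r /\
  fst r <= log2 (1 + p1 * h1 D H beta0 x) /\
  snd r <= log2 (1 + p2 * h2 D H beta0 x) /\
  fst r + snd r <= log2 (1 + p1 * h1 D H beta0 x + p2 * h2 D H beta0 x).

Definition C_f (D H beta0 Pbar x : R) : rset := fun r =>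
  exists p1 p2, 0 <= p1 /\ 0 <= p2 /\ p1 + p2 <= Pbar /\ C_MAC D H beta0 x p1 p2 r.

Definition set_union (A B : rset) : rset := fun r => A r \/ B r.
Definition subset (A B : rset) : Prop := forall r, A r -> B r.

Definition convex2 (S : rset) : Prop :=
  forall p q t, S p -> S q -> 0 <= t <= 1 ->
    S (t * fst p + (1 - t) * fst q, t * snd p + (1 - t) * snd q).

Definition Conv (A : rset) : rset := fun p =>
  forall S, convex2 S -> subset A S -> S p.

(** pA, pB are the points where the upper-right common tangent line
    {w1 r1 + w2 r2 = c} (normal in the closed nonnegative quadrant, nonzero),
    a supporting line of Conv(A u B), touches A and B respectively. *)
Definition upper_right_common_tangent_points (A B : rset) (pA pB : R * R) : Prop :=
  A pA /\ B pB /\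
  exists w1 w2 c, 0 <= w1 /\ 0 <= w2 /\ (w1 <> 0 \/ w2 <> 0) /\
    (forall q, Conv (set_union A B) q -> w1 * fst q + w2 * snd q <= c) /\
    w1 * fst pA + w2 * snd pA = c /\
    w1 * fst pB + w2 * snd pB = c.

Definition k_IF (rI rF : R * R) : R := (snd rI - snd rF) / (fst rI - fst rF).
Definition C_IF (rI rF : R * R) : rset := fun r =>
  snd r <= k_IF rI rF * (fst r - fst rI) + snd rI /\ 0 <= fst r /\ 0 <= snd r.

From Stdlib Require Import Reals Lra Psatz.
Open Scope R_scope.

(* By the MAC capacity formula, a rate pair (r1, r2) lies in C_f(x) iff the least total
   power achieving the SNRs u = 2^r1 - 1 and v = 2^r2 - 1, namely a u + b v + min(a, b) u v
   with a, b the inverse channel gains at x, is at most Pbar.  Moving the UAV from x_I towards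
   x_F raises a and lowers b.  The triangle C_IF is the part of the quadrant below the common
   tangent, which supports the convex hull; this gives one direction.  Conversely, let C_f(x)
   lie below the tangent and take a rate pair of C_f(x).  If r1 >= r1^I it already lies in
   C_f(x_I): the upper frontiers v = (Pbar - a u) / (b + min(a, b) u) of C_f(x) and C_f(x_I)
   differ, after cross-multiplication, by a convex quadratic in u that is nonpositive at
   u = 0, so once the frontier of C_f(x) is below that of C_f(x_I) at r1^I it stays below.
   Symmetrically r2 >= r2^F puts it in C_f(x_F).  In the remaining box it lies under the
   chord joining the two touching points, hence in the convex hull. *)

Definition snr (r : R) : R := Rpower 2 r - 1.

Lemma snr_le r r' : r <= r' -> snr r <= snr r'.
Proof. intro h; unfold snr; apply Rplus_le_compat_r, Rle_Rpower; lra. Qed.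

Lemma snr_le_inv r r' : snr r <= snr r' -> r <= r'.
Proof.
  unfold snr; intro h; destruct (Rle_lt_dec r r') as [|hlt]; [assumption|].
  pose proof (Rpower_lt 2 r' r ltac:(lra) hlt); lra.
Qed.

Lemma snr_0 : snr 0 = 0.
Proof. unfold snr; rewrite Rpower_O; lra. Qed.

Lemma snr_nonneg r : 0 <= r -> 0 <= snr r.
Proof. intro h; rewrite <- snr_0; apply snr_le, h. Qed.

Lemma snr_plus s t : snr (s + t) = snr s + snr t + snr s * snr t.
Proof. unfold snr; rewrite Rpower_plus; ring. Qed.

Lemma snr_log2 y : -1 < y -> snr (log2 (1 + y)) = y.
Proof.
  intro hy; unfold snr; change (Rpower 2 (Rlog 2 (1 + y)) - 1 = y).
  rewrite Rpower_Rlog; lra.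
Qed.

Lemma le_log2_iff r y : -1 < y -> r <= log2 (1 + y) <-> snr r <= y.
Proof.
  intro hy; rewrite <- (snr_log2 y hy) at 2; split; [apply snr_le | apply snr_le_inv].
Qed.

Lemma log2_nonneg y : 0 <= y -> 0 <= log2 (1 + y).
Proof. intro hy; apply le_log2_iff; [lra|]; rewrite snr_0; exact hy. Qed.

Lemma Rle_div_iff v n d : 0 < d -> v <= n / d <-> v * d <= n.
Proof.
  intro hd; split; intro h.
  - apply (Rmult_le_compat_r d) in h; [|lra].
    replace (n / d * d) with n in h by (field; lra); exact h.
  - apply (Rmult_le_reg_r d); [exact hd|].
    replace (n / d * d) with n by (field; lra); exact h.
Qed.

Lemma Rdiv_le_Rdiv_iff n1 d1 n2 d2 :
  0 < d1 -> 0 < d2 -> n1 / d1 <= n2 / d2 <-> n1 * d2 <= n2 * d1.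
Proof.
  intros h1 h2; rewrite Rle_div_iff by exact h2.
  replace (n1 / d1 * d2) with (n1 * d2 / d1) by (field; lra).
  split; intro h.
  - apply (Rmult_le_compat_r d1) in h; [|lra].
    replace (n1 * d2 / d1 * d1) with (n1 * d2) in h by (field; lra); exact h.
  - apply (Rmult_le_reg_r d1); [exact h1|].
    replace (n1 * d2 / d1 * d1) with (n1 * d2) by (field; lra); exact h.
Qed.

Lemma inv_chan_gain beta0 H xk y :
  0 < H -> 0 < beta0 -> / chan_gain beta0 H xk y = ((y - xk) ^ 2 + H ^ 2) / beta0.
Proof.
  intros hH hb; unfold chan_gain.
  pose proof (pow2_ge_0 (y - xk)); pose proof (pow_lt H 2 hH).
  field; lra.
Qed.

Lemma chan_gain_pos beta0 H xk y : 0 < H -> 0 < beta0 -> 0 < chan_gain beta0 H xk y.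
Proof.
  intros hH hb; unfold chan_gain.
  pose proof (pow2_ge_0 (y - xk)); pose proof (pow_lt H 2 hH).
  apply Rdiv_lt_0_compat; lra.
Qed.

Lemma inv_chan_gain_le beta0 H xk y y' :
  0 < H -> 0 < beta0 -> (y - xk) ^ 2 <= (y' - xk) ^ 2 ->
  / chan_gain beta0 H xk y <= / chan_gain beta0 H xk y'.
Proof.
  intros hH hb hy; rewrite !inv_chan_gain by auto; unfold Rdiv.
  apply Rmult_le_compat_r; [apply Rlt_le, Rinv_0_lt_compat |]; lra.
Qed.

Lemma inv_chan_gain_lt beta0 H xk y y' :
  0 < H -> 0 < beta0 -> (y - xk) ^ 2 < (y' - xk) ^ 2 ->
  / chan_gain beta0 H xk y < / chan_gain beta0 H xk y'.
Proof.
  intros hH hb hy; rewrite !inv_chan_gain by auto; unfold Rdiv.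
  apply Rmult_lt_compat_r; [apply Rinv_0_lt_compat |]; lra.
Qed.

Lemma inv_gains_monotone D H beta0 y y' :
  0 < H -> 0 < beta0 -> - D / 2 <= y <= y' -> y' <= D / 2 ->
  / h1 D H beta0 y <= / h1 D H beta0 y' /\ / h2 D H beta0 y' <= / h2 D H beta0 y.
Proof. intros; split; apply inv_chan_gain_le; auto; nra. Qed.

Lemma inv_h2_lt D H beta0 y y' :
  0 < H -> 0 < beta0 -> y < y' <= D / 2 -> / h2 D H beta0 y' < / h2 D H beta0 y.
Proof. intros; apply inv_chan_gain_lt; auto; nra. Qed.

(* Least p1 + p2 = a X + b Y over received SNRs X = p1 g1, Y = p2 g2 (a = 1/g1, b = 1/g2)
   meeting the MAC constraints u <= X, v <= Y, (1 + u)(1 + v) - 1 <= X + Y: the user with the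
   better channel also carries the excess u v of the sum-rate constraint. *)
Definition min_power (a b u v : R) : R := a * u + b * v + Rmin a b * u * v.

Lemma min_power_le_feasible a b u v X Y :
  0 < a -> 0 < b -> 0 <= v -> u <= X -> v <= Y -> u + v + u * v <= X + Y ->
  min_power a b u v <= a * X + b * Y.
Proof. intros; unfold min_power; apply Rmin_case_strong; intro; nra. Qed.

Lemma min_power_attained a b u v :
  0 <= u -> 0 <= v ->
  exists X Y, u <= X /\ v <= Y /\ u + v + u * v <= X + Y /\
              a * X + b * Y = min_power a b u v.
Proof.
  intros hu hv; unfold min_power; apply Rmin_case_strong; intro.
  - exists (u * (1 + v)), v; repeat split; nra.
  - exists u, (v * (1 + u)); repeat split; nra.
Qed.

Lemma min_power_swap a b u v : min_power a b u v = min_power b a v u.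
Proof. unfold min_power; rewrite Rmin_comm; ring. Qed.

Lemma min_power_le_compat a b u v a' b' u' v' :
  0 <= a <= a' -> 0 <= b <= b' -> 0 <= u <= u' -> 0 <= v <= v' ->
  min_power a b u v <= min_power a' b' u' v'.
Proof.
  intros ha hb hu hv; unfold min_power.
  assert (hm : 0 <= Rmin a b <= Rmin a' b').
  { split; [now apply Rmin_glb|].
    apply Rle_trans with (Rmin a' b).
    - apply Rle_min_compat_r; lra.
    - apply Rle_min_compat_l; lra. }
  assert (u * v <= u' * v') by (apply Rmult_le_compat; lra).
  assert (Rmin a b * (u * v) <= Rmin a' b' * (u' * v')) by (apply Rmult_le_compat; nra).
  assert (a * u <= a' * u') by (apply Rmult_le_compat; lra).
  assert (b * v <= b' * v') by (apply Rmult_le_compat; lra).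
  rewrite !Rmult_assoc; lra.
Qed.

Definition power_region (a b P : R) : rset := fun r =>
  0 <= fst r /\ 0 <= snd r /\ min_power a b (snr (fst r)) (snr (snd r)) <= P.

Lemma C_f_iff_power_region D H beta0 P x r :
  0 < H -> 0 < beta0 ->
  C_f D H beta0 P x r <-> power_region (/ h1 D H beta0 x) (/ h2 D H beta0 x) P r.
Proof.
  unfold C_f, C_MAC, power_region; destruct r as [s t]; simpl.
  intros hH hb.
  pose proof (chan_gain_pos beta0 H (- D / 2) x hH hb) as hg1.
  pose proof (chan_gain_pos beta0 H (D / 2) x hH hb) as hg2.
  fold (h1 D H beta0 x) (h2 D H beta0 x) in hg1, hg2.
  generalize dependent (h1 D H beta0 x); generalize dependent (h2 D H beta0 x).
  intros g2 hg2 g1 hg1.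
  assert (0 < / g1) by (apply Rinv_0_lt_compat; lra).
  assert (0 < / g2) by (apply Rinv_0_lt_compat; lra).
  split.
  - intros (p1 & p2 & hp1 & hp2 & hP & hs & ht & hs1 & ht2 & hst).
    rewrite Rplus_assoc in hst.
    rewrite le_log2_iff in hs1, ht2, hst by nra; rewrite snr_plus in hst.
    repeat split; [exact hs | exact ht |].
    apply Rle_trans with (/ g1 * (p1 * g1) + / g2 * (p2 * g2)).
    + apply min_power_le_feasible; auto using snr_nonneg.
    + replace (/ g1 * (p1 * g1) + / g2 * (p2 * g2)) with (p1 + p2) by (field; lra); exact hP.
  - intros (hs & ht & hP).
    pose proof (snr_nonneg s hs); pose proof (snr_nonneg t ht).
    destruct (min_power_attained (/ g1) (/ g2) (snr s) (snr t)) as (X & Y & hX & hY & hXY & hpow);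
      [assumption .. |].
    exists (/ g1 * X), (/ g2 * Y).
    replace (/ g1 * X * g1) with X by (field; lra); replace (/ g2 * Y * g2) with Y by (field; lra).
    repeat split; try nra.
    + apply le_log2_iff; lra.
    + apply le_log2_iff; lra.
    + rewrite Rplus_assoc; apply le_log2_iff; [lra|]; rewrite snr_plus; lra.
Qed.

Lemma power_region_swap a b P s t :
  power_region a b P (s, t) <-> power_region b a P (t, s).
Proof. unfold power_region; simpl; rewrite min_power_swap; tauto. Qed.

Lemma power_region_lower a b P s0 t0 s t :
  0 <= a -> 0 <= b -> power_region a b P (s0, t0) ->
  0 <= s <= s0 -> 0 <= t <= t0 -> power_region a b P (s, t).
Proof.
  unfold power_region; simpl; intros ha hb (_ & _ & h) hs ht.
  repeat split; try lra.
  eapply Rle_trans; [|exact h].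
  apply min_power_le_compat; repeat split; try lra;
    solve [apply snr_nonneg; lra | apply snr_le; lra].
Qed.

Definition rate_frontier (a b P u : R) : R := (P - a * u) / (b + Rmin a b * u).

Lemma min_power_le_iff_frontier a b P u v :
  0 < a -> 0 < b -> 0 <= u ->
  min_power a b u v <= P <-> v <= rate_frontier a b P u.
Proof.
  intros ha hb hu; unfold rate_frontier.
  assert (0 < Rmin a b) by (apply Rmin_glb_lt; lra).
  rewrite Rle_div_iff by nra; unfold min_power; split; nra.
Qed.

Lemma quadratic_nonneg_right_of p L Q y0 y :
  p <= 0 -> 0 <= Q -> 0 <= y0 <= y -> (y0 = 0 -> 0 <= L) ->
  0 <= p + L * y0 + Q * y0 ^ 2 -> 0 <= p + L * y + Q * y ^ 2.
Proof.
  intros hp hQ hy hL h0.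
  destruct (Req_dec y0 0) as [e | ne].
  - subst y0; specialize (hL eq_refl); nra.
  - assert (hy0 : 0 < y0) by lra.
    assert (0 <= L + Q * y0).
    { apply (Rmult_le_reg_l y0); [exact hy0|]; nra. }
    assert (y0 * (L + Q * y0) <= y * (L + Q * y)) by (apply Rmult_le_compat; nra).
    nra.
Qed.

Lemma rate_frontier_le_right aI bI a b P U0 u :
  0 < aI <= a -> 0 < b <= bI -> 0 < P -> 0 <= U0 <= u ->
  rate_frontier a b P U0 <= rate_frontier aI bI P U0 ->
  rate_frontier a b P u <= rate_frontier aI bI P u.
Proof.
  intros ha hb hP hu hU0.
  set (m := Rmin a b); set (mI := Rmin aI bI).
  assert (hm : 0 < m) by (apply Rmin_glb_lt; lra).
  assert (hmI : 0 < mI) by (apply Rmin_glb_lt; lra).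
  assert (hQ : 0 <= a * mI - aI * m).
  { unfold m, mI; do 2 apply Rmin_case_strong; intros; nra. }
  assert (gap : forall y, 0 <= y ->
            rate_frontier a b P y <= rate_frontier aI bI P y <->
            0 <= P * (b - bI) + (P * m - aI * b - P * mI + a * bI) * y
                 + (a * mI - aI * m) * y ^ 2).
  { intros y hy; unfold rate_frontier; fold m mI.
    rewrite Rdiv_le_Rdiv_iff by nra.
    split; nra. }
  rewrite gap in hU0 |- * by lra.
  apply (quadratic_nonneg_right_of _ _ _ U0); [nra | exact hQ | exact hu | | exact hU0].
  intros ->.
  assert (eb : b = bI) by nra; subst bI.
  assert (mI <= m) by (apply Rle_min_compat_r; lra).
  nra.
Qed.

Lemma power_region_iff_frontier a b P s t :
  0 < a -> 0 < b ->
  power_region a b P (s, t) <->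
  0 <= s /\ 0 <= t /\ snr t <= rate_frontier a b P (snr s).
Proof.
  intros ha hb; unfold power_region; simpl; split.
  - intros (hs & ht & h); rewrite min_power_le_iff_frontier in h by auto using snr_nonneg; auto.
  - intros (hs & ht & h); rewrite min_power_le_iff_frontier by auto using snr_nonneg; auto.
Qed.

Lemma power_region_transfer aI bI a b P w1 w2 c rho tau s t :
  0 < aI <= a -> 0 < b <= bI -> 0 < P -> 0 < w2 ->
  power_region aI bI P (rho, tau) -> w1 * rho + w2 * tau = c ->
  (forall r, power_region a b P r -> w1 * fst r + w2 * snd r <= c) ->
  rho <= s -> power_region a b P (s, t) -> power_region aI bI P (s, t).
Proof.
  intros ha hb hP hw2 hI hline hbelow hs hr.
  rewrite power_region_iff_frontier in hI, hr |- * by lra.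
  destruct hI as (hrho & htau & hI); destruct hr as (hs0 & ht0 & hr).
  assert (hfront : rate_frontier a b P (snr rho) <= snr tau).
  { set (v := rate_frontier a b P (snr rho)).
    destruct (Rle_lt_dec v 0) as [hv | hv]; [pose proof (snr_nonneg tau htau); lra|].
    assert (hv_in : power_region a b P (rho, log2 (1 + v))).
    { apply power_region_iff_frontier; [lra | lra |].
      rewrite snr_log2 by lra; auto using log2_nonneg, Rlt_le, Rle_refl. }
    apply hbelow in hv_in; simpl in hv_in.
    rewrite <- (snr_log2 v) by lra; apply snr_le.
    apply (Rmult_le_reg_l w2); lra. }
  repeat split; [exact hs0 | exact ht0 |].
  apply Rle_trans with (rate_frontier a b P (snr s)); [exact hr|].
  apply (rate_frontier_le_right _ _ _ _ _ (snr rho)); auto.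
  - split; [apply snr_nonneg, hrho | apply snr_le, hs].
  - lra.
Qed.

Lemma supporting_line_fst_pos aI bI aF bF P w1 w2 c rho tau :
  0 < aI -> 0 < aF -> 0 < bF < bI -> 0 < P -> 0 <= w1 -> 0 < w2 ->
  power_region aI bI P (rho, tau) -> w1 * rho + w2 * tau = c ->
  (forall r, power_region aF bF P r -> w1 * fst r + w2 * snd r <= c) -> 0 < w1.
Proof.
  intros haI haF hb hP hw1 hw2 hI hline hbelow.
  destruct (Req_dec w1 0) as [-> | ]; [exfalso | lra].
  set (v := P / bF).
  assert (hv : 0 < v) by (apply Rdiv_lt_0_compat; lra).
  assert (htop : power_region aF bF P (0, log2 (1 + v))).
  { apply power_region_iff_frontier; [lra | lra |].
    rewrite snr_0, snr_log2 by lra; unfold rate_frontier.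
    replace (P - aF * 0) with P by ring; replace (bF + Rmin aF bF * 0) with bF by ring.
    auto using log2_nonneg, Rlt_le, Rle_refl. }
  apply hbelow in htop; simpl in htop.
  assert (hvtau : v <= snr tau).
  { rewrite <- (snr_log2 v) by lra; apply snr_le, (Rmult_le_reg_l w2); lra. }
  destruct hI as (hrho & htau & hI); simpl in hI.
  assert (hbI : bI * snr tau <= P).
  { apply Rle_trans with (min_power aI bI (snr rho) (snr tau)); [|exact hI].
    replace (bI * snr tau) with (min_power 0 bI 0 (snr tau)) by (unfold min_power; ring).
    apply min_power_le_compat; repeat split; auto using snr_nonneg; lra. }
  assert (hPv : P = bF * v) by (unfold v; field; lra).
  assert (hle : bI * v <= bF * v) by nra.
  apply Rmult_le_reg_r in hle; lra.
Qed.

Lemma subset_Conv A : subset A (Conv A).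
Proof. intros p hp S _ hAS; exact (hAS p hp). Qed.

Lemma Conv_monotone A B : subset A B -> subset (Conv A) (Conv B).
Proof. intros hAB p hp S hS hBS; apply hp; [exact hS | intros q hq; apply hBS, hAB, hq]. Qed.

Lemma Conv_below_chord (A B : rset) w1 w2 c rho tau rhoF tauF s t :
  0 < w2 -> w1 * rho + w2 * tau = c -> w1 * rhoF + w2 * tauF = c ->
  A (rho, tau) -> (forall z, tau <= z <= tauF -> B (rhoF, z)) ->
  rhoF < s < rho -> tau <= t -> w1 * s + w2 * t <= c ->
  Conv (set_union A B) (s, t).
Proof.
  intros hw2 hlI hlF hA hB hs ht hbelow.
  set (lam := (s - rhoF) / (rho - rhoF)).
  assert (hlam : 0 < lam < 1).
  { unfold lam; split; [apply Rdiv_lt_0_compat; lra|].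
    apply (Rmult_lt_reg_r (rho - rhoF)); [lra|].
    replace ((s - rhoF) / (rho - rhoF) * (rho - rhoF)) with (s - rhoF) by (field; lra); lra. }
  assert (es : lam * rho + (1 - lam) * rhoF = s) by (unfold lam; field; lra).
  set (z := (t - lam * tau) / (1 - lam)).
  assert (ez : lam * tau + (1 - lam) * z = t) by (unfold z; field; lra).
  assert (hchord : t <= lam * tau + (1 - lam) * tauF).
  { apply (Rmult_le_reg_l w2); [exact hw2|]; rewrite <- es in hbelow; nra. }
  intros S hS hAB.
  assert (hzF : S (rhoF, z)) by (apply hAB; right; apply hB; split; nra).
  pose proof (hS _ _ lam (hAB _ (or_introl hA)) hzF ltac:(lra)) as hcomb; simpl in hcomb.
  rewrite es, ez in hcomb; exact hcomb.
Qed.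

Lemma power_region_sub_Conv aI bI a b aF bF P w1 w2 c rho tau rhoF tauF :
  0 < aI <= a -> a <= aF -> 0 < bF <= b -> b <= bI -> 0 < P -> 0 < w1 -> 0 < w2 ->
  power_region aI bI P (rho, tau) -> power_region aF bF P (rhoF, tauF) ->
  w1 * rho + w2 * tau = c -> w1 * rhoF + w2 * tauF = c ->
  (forall r, power_region a b P r -> w1 * fst r + w2 * snd r <= c) ->
  subset (power_region a b P)
         (Conv (set_union (power_region aI bI P) (power_region aF bF P))).
Proof.
  intros ha haF hb hbI hP hw1 hw2 hI hF hlI hlF hbelow [s t] hr.
  destruct (Rle_lt_dec rho s) as [hs | hs].
  { apply subset_Conv; left.
    exact (power_region_transfer aI bI a b P w1 w2 c rho tau s t
             ha ltac:(lra) hP hw2 hI hlI hbelow hs hr). }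
  destruct (Rle_lt_dec tauF t) as [ht | ht].
  { apply subset_Conv; right; apply power_region_swap.
    apply (power_region_transfer bF aF b a P w2 w1 c tauF rhoF); try lra.
    - apply power_region_swap, hF.
    - intros [s' t'] hr'; apply power_region_swap, hbelow in hr'; simpl in *; lra.
    - apply power_region_swap, hr. }
  pose proof hI as (hrho & htau & _); pose proof hF as (hrhoF & _);
    pose proof hr as (hs0 & ht0 & _); simpl in *.
  destruct (Rle_lt_dec s rhoF) as [hsF | hsF].
  { apply subset_Conv; right; apply (power_region_lower _ _ _ rhoF tauF); auto; lra. }
  destruct (Rle_lt_dec t tau) as [htI | htI].
  { apply subset_Conv; left; apply (power_region_lower _ _ _ rho tau); auto; lra. }
  apply (Conv_below_chord _ _ w1 w2 c rho tau rhoF tauF); auto; try lra.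
  - intros z hz; apply (power_region_lower _ _ _ rhoF tauF); auto; lra.
  - apply (hbelow (s, t) hr).
Qed.

Lemma nonvertical_line_snd_pos w1 w2 c rI rF :
  0 <= w2 -> (w1 <> 0 \/ w2 <> 0) -> fst rI <> fst rF ->
  w1 * fst rI + w2 * snd rI = c -> w1 * fst rF + w2 * snd rF = c -> 0 < w2.
Proof.
  intros hw2 hnz hk hI hF.
  destruct (Req_dec w2 0) as [-> | ]; [exfalso | lra].
  destruct hnz as [hw1 | ]; [| lra].
  apply hk, (Rmult_eq_reg_l w1); lra.
Qed.

Lemma C_IF_iff_below_line w1 w2 c rI rF :
  0 < w2 -> fst rI <> fst rF ->
  w1 * fst rI + w2 * snd rI = c -> w1 * fst rF + w2 * snd rF = c ->
  forall r, C_IF rI rF r <-> w1 * fst r + w2 * snd r <= c /\ 0 <= fst r /\ 0 <= snd r.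
Proof.
  intros hw2 hk hI hF r.
  assert (hslope : k_IF rI rF = - w1 / w2).
  { unfold k_IF; apply (Rmult_eq_reg_r (w2 * (fst rI - fst rF))).
    - field_simplify; lra.
    - apply Rmult_integral_contrapositive; lra. }
  unfold C_IF; rewrite hslope.
  assert (e : w2 * (- w1 / w2 * (fst r - fst rI) + snd rI) = c - w1 * fst r)
    by (field_simplify; lra).
  split; intros (h & hr1 & hr2); (split; [| tauto]).
  - apply (Rmult_le_compat_l w2) in h; lra.
  - apply (Rmult_le_reg_l w2); lra.
Qed.

Lemma C_f_sub_Conv_of_below_line D H beta0 Pbar xI x xF w1 w2 c rho tau rhoF tauF :
  0 < H -> 0 < beta0 -> 0 < Pbar ->
  - D / 2 <= xI -> xI < xF -> xF <= D / 2 -> xI <= x <= xF -> 0 <= w1 -> 0 < w2 ->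
  C_f D H beta0 Pbar xI (rho, tau) -> C_f D H beta0 Pbar xF (rhoF, tauF) ->
  w1 * rho + w2 * tau = c -> w1 * rhoF + w2 * tauF = c ->
  (forall r, C_f D H beta0 Pbar xF r -> w1 * fst r + w2 * snd r <= c) ->
  (forall r, C_f D H beta0 Pbar x r -> w1 * fst r + w2 * snd r <= c) ->
  subset (C_f D H beta0 Pbar x)
         (Conv (set_union (C_f D H beta0 Pbar xI) (C_f D H beta0 Pbar xF))).
Proof.
  intros hH hb0 hP hxI hIF hxF hx hw1 hw2 hI hF hlI hlF hbelowF hbelow.
  set (a y := / h1 D H beta0 y); set (b y := / h2 D H beta0 y).
  assert (hreg : forall y r, C_f D H beta0 Pbar y r <-> power_region (a y) (b y) Pbar r)
    by (intros; apply C_f_iff_power_region; assumption).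
  assert (hpos : forall y, 0 < a y /\ 0 < b y)
    by (intro; split; apply Rinv_0_lt_compat, chan_gain_pos; assumption).
  destruct (hpos xI) as [haI hbI], (hpos xF) as [haF hbF].
  destruct (inv_gains_monotone D H beta0 xI x) as [haIx hbxI]; try lra.
  destruct (inv_gains_monotone D H beta0 x xF) as [haxF hbFx]; try lra.
  pose proof (inv_h2_lt D H beta0 xI xF hH hb0 (conj hIF hxF)) as hbFI.
  rewrite hreg in hI, hF.
  assert (hw1p : 0 < w1).
  { apply (supporting_line_fst_pos (a xI) (b xI) (a xF) (b xF) Pbar w1 w2 c rho tau); auto.
    intros r hr; apply hbelowF, hreg, hr. }
  assert (hsub : subset (power_region (a x) (b x) Pbar)
                        (Conv (set_union (power_region (a xI) (b xI) Pbar)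
                                         (power_region (a xF) (b xF) Pbar)))).
  { apply (power_region_sub_Conv _ _ _ _ _ _ _ w1 w2 c rho tau rhoF tauF); auto.
    intros q hq; apply hbelow, hreg, hq. }
  intros r hr; refine (Conv_monotone _ _ _ r (hsub r (proj1 (hreg x r) hr))).
  intros q [hq | hq]; [left | right]; apply hreg, hq.
Qed.

Theorem lemma5 (D H beta0 Pbar : R)
  (hD : 0 < D) (hH : 0 < H) (hbeta0 : 0 < beta0) (hP : 0 < Pbar)
  (xI xF : R) (hxI : - D / 2 <= xI) (hIF : xI < xF) (hxF : xF <= D / 2)
  (rI rF : R * R)
  (htan : upper_right_common_tangent_points
            (C_f D H beta0 Pbar xI) (C_f D H beta0 Pbar xF) rI rF)
  (hk : fst rI <> fst rF)
  (x : R) (hx : xI <= x <= xF) :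
  subset (C_f D H beta0 Pbar x)
         (Conv (set_union (C_f D H beta0 Pbar xI) (C_f D H beta0 Pbar xF)))
  <-> subset (C_f D H beta0 Pbar x) (C_IF rI rF).
Proof.
  destruct htan as (hI & hF & w1 & w2 & c & hw1 & hw2 & hnz & hsup & hlI & hlF).
  pose proof (nonvertical_line_snd_pos w1 w2 c rI rF hw2 hnz hk hlI hlF) as hw2p.
  assert (hCIF := C_IF_iff_below_line w1 w2 c rI rF hw2p hk hlI hlF).
  split.
  - intros hsub r hr; apply hCIF; split; [apply hsup, hsub, hr |].
    apply C_f_iff_power_region in hr; [destruct hr as (? & ? & _); auto | assumption ..].
  - intros hsub; destruct rI as [rho tau], rF as [rhoF tauF].
    apply (C_f_sub_Conv_of_below_line _ _ _ _ _ _ _ w1 w2 c rho tau rhoF tauF); auto.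
    + intros r hr; apply hsup, subset_Conv; right; exact hr.
    + intros r hr; apply hsub, hCIF in hr; tauto.
Qed.
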